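(* Let $h_1,h_2$ be flow graphs over a flow monoid with $X=h_1.X=h_2.X$ and $h_1.\mathit{in}=h_2.\mathit{in}$, and let $F$ be the least fixed point of $\mathrm{ext}_{h_1,h_2}$ on the lattice $(\mathcal{P}(X)^\top,\sqsubseteq)$. If $F\neq\top$, then $F\in\mathrm{FP}(h_1,h_2)$.
   Context: A flow monoid is a commutative monoid $(\mathbb{M},+,0)$ such that $n\le m :\iff \exists o.\ m=n+o$ is a partial order in which every ascending chain $K$ has a least upper bound $\bigsqcup K$, and $n+\bigsqcup K=\bigsqcup(n+K)$. $\mathcal{C}(\mathbb{M}\to\mathbb{M})$ is the set of functions commuting with least upper bounds of ascending chains. Infinite sums denote least upper bounds of finite partial sums. A flow graph is $h=(X,E,\mathit{in})$ with $X\subseteq\mathbb{N}$ finite, $E:X\times\mathbb{N}\to\mathcal{C}(\mathbb{M}\to\mathbb{M})$, $\mathit{in}:(\mathbb{N}\setminus X)\times X\to\mathbb{M}$; $\mathit{in}_x=\sum_{y\in\mathbb{N}\setminus X}\mathit{in}(y,x)$; the flow $h.\mathit{flow}$ is the least $\mathit{flow}:X\to\mathbb{M}$ with $\mathit{flow}(x)=\mathit{in}_x+\sum_{y\in X}E(y,x)(\mathit{flow}(y))$; the outflow is $h.\mathit{out}(x,y)=E(x,y)(h.\mathit{flow}(x))$ for $x\in X$, $y\notin X$. Transfer function: $\mathsf{tf}(h)(\mathit{in}')$ is the outflow of $(X,E,\mathit{in}')$. $\mathsf{tf}(h_1)=_{\mathit{in}}\mathsf{tf}(h_2)$ means equality on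 all inflows $\mathit{in}'\le\mathit{in}$ (pointwise). Contextual equivalence $h_1\approx h_2$: $h_1.X=h_2.X$, $h_1.\mathit{in}=h_2.\mathit{in}$, $\mathsf{tf}(h_1)=_{h_1.\mathit{in}}\mathsf{tf}(h_2)$. Restriction: for $Y\subseteq\mathbb{N}$, $h|_Y=(X\cap Y,\ E|_{(X\cap Y)\times\mathbb{N}},\ \mathit{in}')$ with $\mathit{in}'(z,y)=\mathit{in}(z,y)$ for $z\notin X$, $y\in X\cap Y$, and $\mathit{in}'(x,y)=E(x,y)(h.\mathit{flow}(x))$ for $x\in X\setminus Y$, $y\in X\cap Y$. Footprints: $\mathrm{FP}(h_1,h_2)$ is the set of $Y\subseteq X$ with $h_1|_Y\approx h_2|_Y$ and $h_1|_{X\setminus Y}=h_2|_{X\setminus Y}$. $\mathrm{Out}(h_1,h_2)=\{x\in X\mid \exists z\in\mathbb{N}.\ h_1.E(x,z)\neq h_2.E(x,z)\}$; for $Z\subseteq X$, $\mathrm{TF}_{h_1,h_2}(Z)=\{x\in\mathbb{N}\setminus Z\mid \exists\,\mathit{in}\le (h_1|_Z).\mathit{in}\ \exists z\in Z:\ \mathsf{tf}(h_1|_Z)(\mathit{in})(z,x)\neq\mathsf{tf}(h_2|_Z)(\mathit{in})(z,x)\}$. $\mathcal{P}(X)^\top=\mathcal{P}(X)\uplus\{\top\}$, ordered by inclusion on $\mathcal{P}(X)$ with $\top$ as greatest element; $\sqcup$ is the corresponding join. $\mathrm{ext}_{h_1,h_2}:\mathcal{P}(X)^\top\to\mathcal{P}(X)^\top$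 maps $\top\mapsto\top$ and $Z\subseteq X$ to $\top$ if $\mathrm{TF}_{h_1,h_2}(Z)\not\subseteq X$, and otherwise to $Z\cup\mathrm{Out}(h_1,h_2)\cup\mathrm{TF}_{h_1,h_2}(Z)$. *)

From HB Require Import structures.
From mathcomp Require Import all_boot.
From mathcomp Require Import finmap.
From Stdlib Require Import ClassicalEpsilon.

Set Implicit Arguments.
Unset Strict Implicit.
Unset Printing Implicit Defensive.

Local Open Scope fset_scope.

Section MonoidOrder.
Variables (T : Type) (add : T -> T -> T).

Definition mle (n m : T) : Prop := exists o, m = add n o.

Definition ascending (K : nat -> T) : Prop := forall i, mle (K i) (K i.+1).

Definition is_lub (K : nat -> T) (l : T) : Prop :=
  (forall i, mle (K i) l) /\ (forall u, (forall i, mle (K i) u) -> mle l u).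
End MonoidOrder.

Record flowMonoid := FlowMonoid {
  fm_car :> Type;
  fm_add : fm_car -> fm_car -> fm_car;
  fm_zero : fm_car;
  fm_addA : forall a b c, fm_add a (fm_add b c) = fm_add (fm_add a b) c;
  fm_addC : forall a b, fm_add a b = fm_add b a;
  fm_add0 : forall a, fm_add a fm_zero = a;
  fm_le_refl : forall a, mle fm_add a a;
  fm_le_trans : forall a b c, mle fm_add a b -> mle fm_add b c -> mle fm_add a c;
  fm_le_antisym : forall a b, mle fm_add a b -> mle fm_add b a -> a = b;
  fm_lub_ex : forall K, ascending fm_add K -> exists l, is_lub fm_add K l;
  fm_add_lub : forall n K l, ascending fm_add K -> is_lub fm_add K l ->
                 is_lub fm_add (fun i => fm_add n (K i)) (fm_add n l)
}.

Definition pb (P : Prop) : bool :=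
  if excluded_middle_informative P then true else false.

Section Flows.
Variable M : flowMonoid.

Local Notation madd := (@fm_add M).
Local Notation mzero := (@fm_zero M).
Local Notation le := (@mle M madd).

Definition lub (K : nat -> M) : M :=
  epsilon (inhabits mzero) (is_lub madd K).

Definition continuous (f : M -> M) : Prop :=
  forall K l, ascending madd K -> is_lub madd K l ->
    is_lub madd (fun i => f (K i)) (f l).

(* Flow graphs (X, E, in).  E and in are stored as total functions; only
   their values on X x N, resp. (N \ X) x X, are meaningful. *)
Record flowGraph := FlowGraph {
  fg_X : {fset nat};
  fg_E : nat -> nat -> M -> M;
  fg_in : nat -> nat -> M;
  fg_Econt : forall x z, x \in fg_X -> continuous (fg_E x z)
}.

(* in_x = sum_{y in N \ X} in(y, x): lub of the finite partial sums *)
Definition inflow_psum (h : flowGraph) (x : nat) (n : nat) : M :=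
  \big[madd/mzero]_(0 <= y < n | y \notin fg_X h) fg_in h y x.

Definition inflow (h : flowGraph) (x : nat) : M := lub (inflow_psum h x).

Definition is_flow_sol (h : flowGraph) (f : nat -> M) : Prop :=
  forall x, x \in fg_X h ->
    f x = madd (inflow h x) (\big[madd/mzero]_(y <- fg_X h) fg_E h y x (f y)).

Definition is_least_flow (h : flowGraph) (f : nat -> M) : Prop :=
  is_flow_sol h f /\
  forall g, is_flow_sol h g -> forall x, x \in fg_X h -> le (f x) (g x).

(* h.flow : the least solution of the flow equation (values outside X irrelevant) *)
Definition flow (h : flowGraph) : nat -> M :=
  epsilon (inhabits (fun _ => mzero)) (is_least_flow h).

(* h.out(x, y) = E(x, y)(h.flow(x)), meaningful for x in X, y notin X *)
Definition outflow (h : flowGraph) (x y : nat) : M := fg_E h x y (flow h x).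

Definition with_in (h : flowGraph) (inn : nat -> nat -> M) : flowGraph :=
  @FlowGraph (fg_X h) (fg_E h) inn (@fg_Econt h).

Definition tf (h : flowGraph) (inn : nat -> nat -> M) : nat -> nat -> M :=
  outflow (with_in h inn).

Definition in_le (X : {fset nat}) (i1 i2 : nat -> nat -> M) : Prop :=
  forall z y, z \notin X -> y \in X -> le (i1 z y) (i2 z y).

Definition in_eq (X : {fset nat}) (i1 i2 : nat -> nat -> M) : Prop :=
  forall z y, z \notin X -> y \in X -> i1 z y = i2 z y.

Definition out_eq (X : {fset nat}) (o1 o2 : nat -> nat -> M) : Prop :=
  forall x y, x \in X -> y \notin X -> o1 x y = o2 x y.

Definition tf_eq_upto (h1 h2 : flowGraph) (inb : nat -> nat -> M) : Prop :=
  forall inn, in_le (fg_X h1) inn inb ->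
    out_eq (fg_X h1) (tf h1 inn) (tf h2 inn).

Definition ctx_equiv (h1 h2 : flowGraph) : Prop :=
  fg_X h1 = fg_X h2 /\ in_eq (fg_X h1) (fg_in h1) (fg_in h2) /\
  tf_eq_upto h1 h2 (fg_in h1).

Definition fg_eq (h1 h2 : flowGraph) : Prop :=
  fg_X h1 = fg_X h2 /\
  (forall x z, x \in fg_X h1 -> fg_E h1 x z = fg_E h2 x z) /\
  in_eq (fg_X h1) (fg_in h1) (fg_in h2).

Lemma restrict_cont (h : flowGraph) (Y : {fset nat}) :
  forall x z, x \in fg_X h `&` Y -> continuous (fg_E h x z).
Proof. by move=> x z; rewrite in_fsetI => /andP[Hx _]; exact: fg_Econt Hx. Qed.

Definition restrict (h : flowGraph) (Y : {fset nat}) : flowGraph :=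
  @FlowGraph (fg_X h `&` Y) (fg_E h)
    (fun z y => if z \in fg_X h then fg_E h z y (flow h z) else fg_in h z y)
    (@restrict_cont h Y).

Definition FP (h1 h2 : flowGraph) (Y : {fset nat}) : Prop :=
  Y `<=` fg_X h1 /\
  ctx_equiv (restrict h1 Y) (restrict h2 Y) /\
  fg_eq (restrict h1 (fg_X h1 `\` Y)) (restrict h2 (fg_X h1 `\` Y)).

Definition Out (h1 h2 : flowGraph) (x : nat) : Prop :=
  x \in fg_X h1 /\ exists z, fg_E h1 x z <> fg_E h2 x z.

Definition TF (h1 h2 : flowGraph) (Z : {fset nat}) (x : nat) : Prop :=
  x \notin Z /\
  exists inn, in_le (fg_X (restrict h1 Z)) inn (fg_in (restrict h1 Z)) /\
  exists z, z \in Z /\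
    tf (restrict h1 Z) inn z x <> tf (restrict h2 Z) inn z x.

(* P(X)^T represented as option {fset nat}: None = T *)
Definition ext (h1 h2 : flowGraph) (F : option {fset nat}) : option {fset nat} :=
  match F with
  | None => None
  | Some Z =>
      if excluded_middle_informative (forall x, TF h1 h2 Z x -> x \in fg_X h1)
      then Some (Z `|` [fset x in fg_X h1 | pb (Out h1 h2 x \/ TF h1 h2 Z x)])
      else None
  end.

Definition FP_top (h1 h2 : flowGraph) (F : option {fset nat}) : Prop :=
  match F with Some Y => FP h1 h2 Y | None => False end.

End Flows.

Definition top_le (F G : option {fset nat}) : Prop :=
  match F, G with
  | _, None => True
  | None, Some _ => False
  | Some A, Some B => A `<=` B
  end.

Definition in_PXtop (X : {fset nat}) (F : option {fset nat}) : Prop :=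
  match F with None => True | Some Z => Z `<=` X end.

Definition is_lfp (X : {fset nat}) (f : option {fset nat} -> option {fset nat})
  (F : option {fset nat}) : Prop :=
  in_PXtop X F /\ f F = F /\
  forall G, in_PXtop X G -> f G = G -> top_le F G.

(* Being a fixed point means that Y is closed: every node whose outgoing edges
   differ between h1 and h2 lies in Y, and the transfer functions of the
   restrictions h1|_Y and h2|_Y agree on all inflows below (h1|_Y).in, also on
   the edges leaving Y.

   The key "transfer"
   lemma glues the flow of h2|_Y with the flow of h1 outside Y into a
   pre-fixed point for h2, giving h2.flow <= h1.flow outside Y; by symmetry
   the flows coincide outside Y, from which both footprint conditions follow. *)

From HB Require Import structures.
From mathcomp Require Import all_boot finmap.
From Stdlib Require Import ClassicalEpsilon FunctionalExtensionality Classical.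

Set Implicit Arguments.
Unset Strict Implicit.
Unset Printing Implicit Defensive.

Local Open Scope fset_scope.

Section FlowTheory.
Variable M : flowMonoid.
Local Notation madd := (@fm_add M).
Local Notation mz := (fm_zero M).
Local Notation le := (mle (@fm_add M)).

Lemma fm_add0l (a : M) : madd mz a = a.
Proof. by rewrite fm_addC fm_add0. Qed.

HB.instance Definition _ := Monoid.isComLaw.Build (fm_car M) mz madd
  (@fm_addA M) (@fm_addC M) fm_add0l.

Lemma mle_refl (a : M) : le a a. Proof. exact: fm_le_refl. Qed.

Lemma mle_trans (a b c : M) : le a b -> le b c -> le a c.
Proof. exact: fm_le_trans. Qed.

Lemma mle_anti (a b : M) : le a b -> le b a -> a = b.
Proof. exact: fm_le_antisym. Qed.

Lemma mle0 (a : M) : le mz a.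
Proof. by exists a; rewrite fm_add0l. Qed.

Lemma mle_add (a b c d : M) : le a b -> le c d -> le (madd a c) (madd b d).
Proof.
move=> [o1 ->] [o2 ->]; exists (madd o1 o2).
rewrite -!fm_addA; congr madd; rewrite !fm_addA; congr madd; exact: fm_addC.
Qed.

Lemma mle_big (s : seq nat) (F G : nat -> M) :
  (forall y, y \in s -> le (F y) (G y)) ->
  le (\big[madd/mz]_(y <- s) F y) (\big[madd/mz]_(y <- s) G y).
Proof.
elim: s => [|a s IH] H; first by rewrite !big_nil; exact: mle_refl.
rewrite !big_cons; apply: mle_add; first by apply: H; rewrite mem_head.
by apply: IH => y Hy; apply: H; rewrite in_cons Hy orbT.
Qed.

Lemma chain_mono (K : nat -> M) :
  ascending madd K -> forall i j, (i <= j)%N -> le (K i) (K j).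
Proof.
move=> HK i j /subnK <-; elim: (j - i)%N => [|k IH].
  by rewrite add0n; exact: mle_refl.
by rewrite addSn; exact: mle_trans IH (HK _).
Qed.

Lemma lub_spec (K : nat -> M) : ascending madd K -> is_lub madd K (lub K).
Proof. by move=> HK; rewrite /lub; apply: epsilon_spec; exact: fm_lub_ex. Qed.

Lemma lub_uniq (K : nat -> M) a b : is_lub madd K a -> is_lub madd K b -> a = b.
Proof. by move=> [Ua La] [Ub Lb]; apply: mle_anti; [exact: La Ub | exact: Lb Ua]. Qed.

Lemma lub_ext (K K' : nat -> M) : (forall n, K n = K' n) -> lub K = lub K'.
Proof. by move=> H; congr lub; apply: functional_extensionality. Qed.

Lemma lub_shift (K : nat -> M) l :
  ascending madd K -> is_lub madd K l -> is_lub madd (fun n => K n.+1) l.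
Proof.
move=> HK [U L]; split; first by move=> i; exact: U.
by move=> u Hu; apply: L => i; exact: mle_trans (HK i) (Hu i).
Qed.

(* Continuous maps are monotone: apply continuity to the chain a, b, b, ... *)
Lemma cont_mono (f : M -> M) : continuous f -> forall a b, le a b -> le (f a) (f b).
Proof.
move=> Hf a b Hab; pose K i := if i is 0 then a else b.
have HK : ascending madd K by case=> [|i] /=; [exact: Hab | exact: mle_refl].
have Hl : is_lub madd K b.
  split; first by case=> [|i]; [exact: Hab | exact: mle_refl].
  by move=> u Hu; exact: (Hu 1%N).
by have [U _] := Hf K b HK Hl; exact: (U 0%N).
Qed.

Lemma lub_add (K L : nat -> M) a b :
  ascending madd K -> ascending madd L -> is_lub madd K a -> is_lub madd L b ->
  is_lub madd (fun i => madd (K i) (L i)) (madd a b).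
Proof.
move=> HK HL [Ua La] [Ub Lb]; split.
  by move=> i; apply: mle_add; [exact: Ua | exact: Ub].
move=> u Hu.
have Ha : forall j, le (madd a (L j)) u.
  move=> j; rewrite fm_addC; have [_ Lst] := fm_add_lub (L j) HK (conj Ua La).
  apply: Lst => i; apply: mle_trans (Hu (maxn i j)); rewrite fm_addC.
  by apply: mle_add; apply: chain_mono => //; [exact: leq_maxl | exact: leq_maxr].
by have [_ Lst] := fm_add_lub a HL (conj Ub Lb); exact: Lst.
Qed.

Lemma lub_big (s : seq nat) (F : nat -> nat -> M) (l : nat -> M) :
  (forall y, y \in s -> ascending madd (F y) /\ is_lub madd (F y) (l y)) ->
  ascending madd (fun n => \big[madd/mz]_(y <- s) F y n) /\
  is_lub madd (fun n => \big[madd/mz]_(y <- s) F y n) (\big[madd/mz]_(y <- s) l y).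
Proof.
elim: s => [|a s IH] H.
  split; first by move=> n; rewrite !big_nil; exact: mle_refl.
  split; first by move=> n; rewrite !big_nil; exact: mle_refl.
  by move=> u Hu; have := Hu 0%N; rewrite !big_nil.
have [Ha1 Ha2] := H a (mem_head _ _).
have [IH1 IH2] := IH (fun y Hy => H y (mem_behead (s := a :: s) Hy)).
have -> : (fun n => \big[madd/mz]_(y <- a :: s) F y n) =
          (fun n => madd (F a n) (\big[madd/mz]_(y <- s) F y n)).
  by apply: functional_extensionality => n; rewrite big_cons.
rewrite big_cons; split; last exact: lub_add.
by move=> n; apply: mle_add; [exact: Ha1 | exact: IH1].
Qed.

Lemma asc_psum (P : pred nat) (c : nat -> M) :
  ascending madd (fun n => \big[madd/mz]_(0 <= y < n | P y) c y).
Proof.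
move=> n /=; rewrite big_mkcond [X in mle _ _ X]big_mkcond big_nat_recr //=.
by exists (if P n then c n else mz).
Qed.

Lemma big_uniq_eq (s1 s2 : seq nat) (G : nat -> M) : uniq s1 -> uniq s2 -> s1 =i s2 ->
  \big[madd/mz]_(y <- s1) G y = \big[madd/mz]_(y <- s2) G y.
Proof. by move=> u1 u2 e; apply: perm_big; apply: uniq_perm. Qed.

Lemma big_split_sub (X S : {fset nat}) (G : nat -> M) : {subset S <= X} ->
  \big[madd/mz]_(y <- X) G y =
  madd (\big[madd/mz]_(y <- X | y \notin S) G y) (\big[madd/mz]_(y <- S) G y).
Proof.
move=> HS; rewrite (bigID (fun y => y \in S)) /= fm_addC; congr madd.
rewrite -big_filter; apply: big_uniq_eq.
- by rewrite filter_uniq // fset_uniq.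
- exact: fset_uniq.
by move=> y; rewrite mem_filter; case Hy: (y \in S) => //=; rewrite HS.
Qed.

Lemma lub_split_sub (S X : {fset nat}) (c : nat -> M) : {subset S <= X} ->
  lub (fun n => \big[madd/mz]_(0 <= y < n | y \notin S) c y) =
  madd (lub (fun n => \big[madd/mz]_(0 <= y < n | y \notin X) c y))
       (\big[madd/mz]_(y <- X | y \notin S) c y).
Proof.
move=> HS; pose N := (\max_(y <- X) y).+1.
have HN y : y \in X -> (y < N)%N.
  by move=> Hy; rewrite ltnS; exact: (@leq_bigmax_seq _ _ xpredT id y Hy).
(* beyond N, every partial sum splits exactly *)
have Hsplit n : (N <= n)%N ->
  \big[madd/mz]_(0 <= y < n | y \notin S) c y =
  madd (\big[madd/mz]_(0 <= y < n | y \notin X) c y)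
       (\big[madd/mz]_(y <- X | y \notin S) c y).
  move=> Hn; rewrite (bigID (fun y => y \in X)) /= fm_addC; congr madd.
    apply: eq_bigl => y; case Hy: (y \in X) => /=; first by rewrite andbF.
    by rewrite andbT; apply/negP => /HS; rewrite Hy.
  rewrite -big_filter -[RHS]big_filter; apply: big_uniq_eq.
  - by rewrite filter_uniq // iota_uniq.
  - by rewrite filter_uniq // fset_uniq.
  move=> y; rewrite !mem_filter mem_index_iota.
  case Hy: (y \in X); rewrite ?andbF ?andbT //=.
  by rewrite (leq_trans (HN y Hy) Hn) andbT.
have HAasc := asc_psum (fun y => y \notin S) c.
have HBasc := asc_psum (fun y => y \notin X) c.
apply: lub_uniq (lub_spec HAasc) _; split.
  move=> n; apply: mle_trans (chain_mono HAasc (leq_addl N n)) _.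
  rewrite Hsplit ?leq_addr //; apply: mle_add; last exact: mle_refl.
  by have [U _] := lub_spec HBasc; exact: U.
move=> u Hu; rewrite fm_addC.
have [_ Lst] := fm_add_lub (\big[madd/mz]_(y <- X | y \notin S) c y)
                  HBasc (lub_spec HBasc).
apply: Lst => m; apply: mle_trans (Hu (N + m)%N).
rewrite Hsplit ?leq_addr // fm_addC; apply: mle_add; last exact: mle_refl.
exact: (chain_mono HBasc (leq_addl N m)).
Qed.

Lemma inflow_ext (g g' : flowGraph M) x : fg_X g = fg_X g' ->
  (forall z, z \notin fg_X g -> fg_in g z x = fg_in g' z x) ->
  inflow g x = inflow g' x.
Proof.
move=> HX Hin; rewrite /inflow /inflow_psum -HX.
by apply: lub_ext => n; apply: eq_bigr => z Hz; exact: Hin.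
Qed.

Definition flow_op (h : flowGraph M) (f : nat -> M) (x : nat) : M :=
  madd (inflow h x) (\big[madd/mz]_(y <- fg_X h) fg_E h y x (f y)).

Lemma flow_op_mono h f g : (forall y, y \in fg_X h -> le (f y) (g y)) ->
  forall x, le (flow_op h f x) (flow_op h g x).
Proof.
move=> H x; apply: mle_add; first exact: mle_refl.
apply: (mle_big (F := fun y => fg_E h y x (f y)) (G := fun y => fg_E h y x (g y))).
by move=> y Hy; exact: (cont_mono (fg_Econt x Hy) (H y Hy)).
Qed.

Definition kleene_iter h n := iter n (flow_op h) (fun _ => mz).

Lemma kleene_iter_asc h x : ascending madd (fun n => kleene_iter h n x).
Proof.
move=> n; elim: n x => [|n IH] x; first exact: mle0.
exact: flow_op_mono (fun y _ => IH y) x.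
Qed.

Definition kleene_lim h x := lub (fun n => kleene_iter h n x).

(* By continuity of the edge functions the limit solves the flow equation. *)
Lemma kleene_lim_sol h x : x \in fg_X h -> kleene_lim h x = flow_op h (kleene_lim h) x.
Proof.
move=> Hx.
have [A1 A2] := @lub_big (fg_X h) (fun y n => fg_E h y x (kleene_iter h n y))
                   (fun y => fg_E h y x (kleene_lim h y))
  (fun y Hy => conj (fun n => cont_mono (fg_Econt _ Hy) (kleene_iter_asc h y n))
       (fg_Econt x Hy (kleene_iter_asc h y) (lub_spec (kleene_iter_asc h y)))).
have Hs : is_lub madd (fun n => kleene_iter h n.+1 x) (flow_op h (kleene_lim h) x)
  by exact: (fm_add_lub (inflow h x) A1 A2).
have Hasc := kleene_iter_asc h x.
exact: lub_uniq (lub_shift Hasc (lub_spec Hasc)) Hs.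
Qed.

Lemma kleene_lim_least h p : (forall x, x \in fg_X h -> le (flow_op h p x) (p x)) ->
  forall x, x \in fg_X h -> le (kleene_lim h x) (p x).
Proof.
move=> Hp.
have Hk : forall n x, x \in fg_X h -> le (kleene_iter h n x) (p x).
  elim=> [|n IH] x Hx; first exact: mle0.
  by apply: mle_trans (Hp x Hx); exact: flow_op_mono IH x.
by move=> x Hx; have [_ Lst] := lub_spec (kleene_iter_asc h x); apply: Lst => n; exact: Hk.
Qed.

Lemma flow_least (h : flowGraph M) : is_least_flow h (flow h).
Proof.
rewrite /flow; apply: epsilon_spec; exists (kleene_lim h); split.
  by move=> x Hx; exact: kleene_lim_sol.
move=> g Hg x Hx; apply: kleene_lim_least => // y Hy.
by rewrite [X in le _ X](Hg y Hy); exact: mle_refl.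
Qed.

Lemma flow_sol (h : flowGraph M) x : x \in fg_X h -> flow h x = flow_op h (flow h) x.
Proof. exact: (flow_least h).1. Qed.

Lemma flow_pre (h : flowGraph M) p :
  (forall x, x \in fg_X h -> le (flow_op h p x) (p x)) ->
  forall x, x \in fg_X h -> le (flow h x) (p x).
Proof.
move=> Hp x Hx; apply: mle_trans (kleene_lim_least Hp Hx).
by apply: (flow_least h).2 => // y Hy; exact: kleene_lim_sol.
Qed.

Lemma flow_ext (g1 g2 : flowGraph M) : fg_X g1 = fg_X g2 ->
  (forall y z, y \in fg_X g1 -> fg_E g1 y z = fg_E g2 y z) ->
  in_eq (fg_X g1) (fg_in g1) (fg_in g2) ->
  forall x, x \in fg_X g1 -> flow g1 x = flow g2 x.
Proof.
move=> HX HE Hin.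
have Hop f x : x \in fg_X g1 -> flow_op g1 f x = flow_op g2 f x.
  move=> Hx; rewrite /flow_op -HX; congr madd.
    by apply: inflow_ext => // z Hz; exact: Hin.
  by apply: eq_big_seq => y Hy; rewrite HE.
move=> x Hx; apply: mle_anti.
  apply: (flow_pre (h := g1) (p := flow g2)) => // y Hy.
  by rewrite Hop // -(flow_sol (h := g2)) -?HX //; exact: mle_refl.
apply: (flow_pre (h := g2) (p := flow g1)); last by rewrite -HX.
move=> y Hy2; have Hy : y \in fg_X g1 by rewrite HX.
by rewrite -Hop // -(flow_sol Hy); exact: mle_refl.
Qed.

Lemma sub_fsetIl (X Y : {fset nat}) : {subset X `&` Y <= X}.
Proof. by move=> y; rewrite in_fsetI => /andP[]. Qed.

Lemma sub_fsetIr (X Y : {fset nat}) : {subset X `&` Y <= Y}.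
Proof. by move=> y; rewrite in_fsetI => /andP[]. Qed.

Lemma inflow_restrict (h : flowGraph M) Y x :
  inflow (restrict h Y) x =
  madd (inflow h x)
       (\big[madd/mz]_(y <- fg_X h | y \notin fg_X h `&` Y) fg_E h y x (flow h y)).
Proof.
rewrite /inflow /inflow_psum /=.
rewrite (@lub_split_sub (fg_X h `&` Y) (fg_X h)
   (fun y => if y \in fg_X h then fg_E h y x (flow h y) else fg_in h y x)
   (@sub_fsetIl _ Y)).
congr madd; first by apply: lub_ext => n; apply: eq_bigr => y Hy; rewrite (negbTE Hy).
by rewrite big_seq_cond [RHS]big_seq_cond; apply: eq_bigr => y /andP[Hy _]; rewrite Hy.
Qed.

(* Restriction does not change the flow on the remaining nodes: first the
   restricted flow is below the original one (h.flow is a pre-fixed point). *)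
Lemma restrict_flow_le (h : flowGraph M) Y x : x \in fg_X h `&` Y ->
  le (flow (restrict h Y) x) (flow h x).
Proof.
apply: (flow_pre (h := restrict h Y) (p := flow h)) => y Hy.
rewrite [X in le _ X](flow_sol (sub_fsetIl Hy)) /flow_op /= inflow_restrict -fm_addA.
by rewrite -(big_split_sub (fun z => fg_E h z y (flow h z)) (@sub_fsetIl _ Y)); exact: mle_refl.
Qed.

Lemma restrict_flow (h : flowGraph M) Y x : x \in fg_X h `&` Y ->
  flow (restrict h Y) x = flow h x.
Proof.
(* glue the flow of h|_Y with the flow of h outside Y: a pre-fixed point for h *)
pose p y := if y \in fg_X h `&` Y then flow (restrict h Y) y else flow h y.
have Hpf y : y \in fg_X h -> le (p y) (flow h y).
  by move=> Hy; rewrite /p; case: ifP => Hy'; [exact: restrict_flow_le | exact: mle_refl].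
have Hp : forall x, x \in fg_X h -> le (flow h x) (p x).
  apply: (flow_pre (h := h) (p := p)) => y Hy; case Hy': (y \in fg_X h `&` Y).
    have -> : flow_op h p y = flow_op (restrict h Y) (flow (restrict h Y)) y.
      rewrite /flow_op /= inflow_restrict -fm_addA (big_split_sub _ (@sub_fsetIl _ Y)).
      congr (madd _ (madd _ _)); last by apply: eq_big_seq => z Hz; rewrite /p Hz.
      rewrite big_seq_cond [in RHS]big_seq_cond.
      by apply: eq_bigr => z /andP[_ Hz]; rewrite /p (negbTE Hz).
    by rewrite -(flow_sol (h := restrict h Y) Hy') /p Hy'; exact: mle_refl.
  apply: mle_trans (flow_op_mono Hpf y) _.
  by rewrite /p Hy' -(flow_sol Hy); exact: mle_refl.
move=> Hx; apply: mle_anti; first exact: restrict_flow_le.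
by have := Hp x (sub_fsetIl Hx); rewrite /p Hx.
Qed.

(* The witness is the pre-fixed point of hb gluing the flow of hb|_Y (fed with
   ha|_Y's inflow) on Y with ha.flow outside Y. *)
Section Transfer.
Variables (ha hb : flowGraph M) (Y : {fset nat}).
Hypothesis same_dom : fg_X ha = fg_X hb.
Hypothesis same_in : in_eq (fg_X ha) (fg_in ha) (fg_in hb).
Hypothesis same_edges_out :
  forall y z, y \in fg_X ha -> y \notin Y -> fg_E ha y z = fg_E hb y z.
Hypothesis same_tf : forall z x, z \in fg_X ha `&` Y -> x \in fg_X ha -> x \notin Y ->
  tf (restrict ha Y) (fg_in (restrict ha Y)) z x =
  tf (restrict hb Y) (fg_in (restrict ha Y)) z x.

Let w := with_in (restrict hb Y) (fg_in (restrict ha Y)).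
Let glued y := if y \in fg_X ha `&` Y then flow w y else flow ha y.

Lemma inflow_same x : x \in fg_X ha -> inflow hb x = inflow ha x.
Proof. by move=> Hx; apply: inflow_ext => // z Hz; rewrite same_in // same_dom. Qed.

Lemma glued_sum x :
  \big[madd/mz]_(y <- fg_X hb) fg_E hb y x (glued y) =
  madd (\big[madd/mz]_(y <- fg_X ha | y \notin fg_X ha `&` Y) fg_E ha y x (flow ha y))
       (\big[madd/mz]_(y <- fg_X ha `&` Y) fg_E hb y x (flow w y)).
Proof.
rewrite -same_dom (big_split_sub _ (@sub_fsetIl _ Y)); congr madd.
  rewrite big_seq_cond [in RHS]big_seq_cond; apply: eq_bigr => y /andP[Hy HyS].
  have HyY : y \notin Y by move: HyS; rewrite in_fsetI Hy.
  by rewrite /glued (negbTE HyS) same_edges_out.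
by apply: eq_big_seq => y Hy; rewrite /glued Hy.
Qed.

Lemma glued_op_in x : x \in fg_X ha `&` Y -> flow_op hb glued x = flow_op w (flow w) x.
Proof.
move=> Hx; rewrite /flow_op glued_sum inflow_same ?(sub_fsetIl Hx) // fm_addA.
congr madd; last by rewrite /w /= -same_dom.
have -> : inflow w x = inflow (restrict ha Y) x by apply: inflow_ext => //=; rewrite same_dom.
by rewrite inflow_restrict.
Qed.

(* Outside Y it satisfies the flow equation of ha, since the outflows of
   ha|_Y and w towards X \ Y coincide. *)
Lemma glued_op_out x : x \in fg_X ha -> x \notin Y ->
  flow_op hb glued x = flow_op ha (flow ha) x.
Proof.
move=> Hx HxY; rewrite /flow_op glued_sum inflow_same //.
rewrite [in RHS](big_split_sub _ (@sub_fsetIl _ Y)).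
congr (madd _ (madd _ _)); apply: eq_big_seq => y Hy.
have := same_tf Hy Hx HxY; rewrite /tf /outflow.
change (with_in (restrict ha Y) (fg_in (restrict ha Y))) with (restrict ha Y).
by rewrite restrict_flow //= => ->.
Qed.

Lemma transfer x : x \in fg_X ha -> x \notin Y -> le (flow hb x) (flow ha x).
Proof.
have Hpre : forall x, x \in fg_X hb -> le (flow_op hb glued x) (glued x).
  move=> y Hy2; have Hy : y \in fg_X ha by rewrite same_dom.
  case HyS : (y \in fg_X ha `&` Y).
    have Hyw : y \in fg_X w by rewrite /w /= -same_dom.
    by rewrite glued_op_in // -(flow_sol Hyw) /glued HyS; exact: mle_refl.
  have HyY : y \notin Y by move: HyS; rewrite in_fsetI Hy /= => ->.
  by rewrite glued_op_out // -(flow_sol Hy) /glued HyS; exact: mle_refl.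
move=> Hx HxY; apply: mle_trans (flow_pre Hpre (x := x) _) _; first by rewrite -same_dom.
by rewrite /glued in_fsetI (negbTE HxY) andbF; exact: mle_refl.
Qed.

End Transfer.

End FlowTheory.

Lemma ext_fixed_closed (M : flowMonoid) (h1 h2 : flowGraph M) (Y : {fset nat}) :
  ext h1 h2 (Some Y) = Some Y ->
  (forall x z, x \in fg_X h1 -> x \notin Y -> fg_E h1 x z = fg_E h2 x z) /\
  (forall x, ~ TF h1 h2 Y x).
Proof.
rewrite /ext; case: excluded_middle_informative => [TF_in_X|] // [] HU.
have in_Y x : x \in fg_X h1 -> Out h1 h2 x \/ TF h1 h2 Y x -> x \in Y.
  move=> Hx H; rewrite -HU in_fsetU; apply/orP; right; rewrite !inE /= Hx /pb.
  by case: excluded_middle_informative.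
split.
  move=> x z Hx HxY; apply: NNPP => Hne; move/negP: HxY; apply.
  by apply: in_Y => //; left; split => //; exists z.
move=> x H; have := in_Y x (TF_in_X x H) (or_intror H).
by case: H => /negbTE ->.
Qed.

Section ClosedFootprint.
Variables (M : flowMonoid) (h1 h2 : flowGraph M) (Y : {fset nat}).
Local Notation le := (mle (@fm_add M)).
Hypothesis same_dom : fg_X h1 = fg_X h2.
Hypothesis same_in : in_eq (fg_X h1) (fg_in h1) (fg_in h2).
Hypothesis Y_sub : Y `<=` fg_X h1.
Hypothesis same_edges_out :
  forall x z, x \in fg_X h1 -> x \notin Y -> fg_E h1 x z = fg_E h2 x z.
Hypothesis no_TF : forall x, ~ TF h1 h2 Y x.

Lemma restricted_tf_agree inn : in_le (fg_X h1 `&` Y) inn (fg_in (restrict h1 Y)) ->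
  forall z x, z \in Y -> x \notin Y ->
  tf (restrict h1 Y) inn z x = tf (restrict h2 Y) inn z x.
Proof.
move=> Hle z x Hz HxY; apply: NNPP => Hne; apply: (no_TF (x := x)); split => //.
by exists inn; split => //; exists z.
Qed.

Lemma flow_le21 x : x \in fg_X h1 -> x \notin Y -> le (flow h2 x) (flow h1 x).
Proof.
apply: transfer => // z y Hz _ HyY; apply: restricted_tf_agree => //.
  by move=> a b _ _; exact: mle_refl.
exact: sub_fsetIr Hz.
Qed.

Lemma restricted_in_le21 :
  in_le (fg_X h1 `&` Y) (fg_in (restrict h2 Y)) (fg_in (restrict h1 Y)).
Proof.
move=> z y Hz Hy /=; rewrite -same_dom; case Hz1 : (z \in fg_X h1).
  have HzY : z \notin Y by move: Hz; rewrite in_fsetI Hz1.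
  by rewrite -same_edges_out //; apply: (cont_mono (fg_Econt y Hz1)); exact: flow_le21.
rewrite same_in ?Hz1 ?(sub_fsetIl Hy) //; exact: mle_refl.
Qed.

(* Symmetrically, using that inflow in the transfer condition for h2. *)
Lemma flow_le12 x : x \in fg_X h1 -> x \notin Y -> le (flow h1 x) (flow h2 x).
Proof.
move=> Hx HxY; apply: (@transfer M h2 h1 Y (esym same_dom)) => //; last by rewrite -same_dom.
- by move=> z y Hz Hy; rewrite -same_dom in Hz Hy; symmetry; exact: same_in.
- by move=> y z Hy HyY; symmetry; apply: same_edges_out => //; rewrite same_dom.
move=> z y Hz _ HyY; symmetry; apply: (restricted_tf_agree restricted_in_le21) => //.
exact: sub_fsetIr Hz.
Qed.

Lemma flows_agree_out x : x \in fg_X h1 -> x \notin Y -> flow h1 x = flow h2 x.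
Proof. by move=> Hx HxY; apply: mle_anti; [exact: flow_le12 | exact: flow_le21]. Qed.

Lemma restricted_in_agree :
  in_eq (fg_X h1 `&` Y) (fg_in (restrict h1 Y)) (fg_in (restrict h2 Y)).
Proof.
move=> z y Hz Hy /=; rewrite -same_dom; case Hz1 : (z \in fg_X h1).
  have HzY : z \notin Y by move: Hz; rewrite in_fsetI Hz1.
  by rewrite same_edges_out // flows_agree_out.
by apply: same_in; rewrite ?Hz1 ?(sub_fsetIl Hy).
Qed.

Lemma restrict_ctx_equiv : ctx_equiv (restrict h1 Y) (restrict h2 Y).
Proof.
split; first by rewrite /= same_dom.
split; first exact: restricted_in_agree.
move=> inn Hle x y Hx Hy; apply: restricted_tf_agree => //; first exact: sub_fsetIr Hx.
by apply/negP => HyY; move/negP: Hy; apply; rewrite in_fsetI (fsubsetP Y_sub) ?HyY.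
Qed.

(* On the complement X \ Y the restrictions coincide: same edges, and the
   inflow coming from Y is the outflow of the (equal) flows of the restrictions. *)
Lemma restrict_complement_eq :
  fg_eq (restrict h1 (fg_X h1 `\` Y)) (restrict h2 (fg_X h1 `\` Y)).
Proof.
split; first by rewrite /= same_dom.
split.
  move=> x z /=; rewrite in_fsetI in_fsetD => /andP[Hx /andP[HxY _]].
  exact: same_edges_out.
move=> z y Hz Hy /=; rewrite -same_dom; case Hz1 : (z \in fg_X h1); last first.
  by apply: same_in; rewrite ?Hz1 ?(sub_fsetIl Hy).
have HzY : z \in Y by move: Hz; rewrite in_fsetI in_fsetD Hz1 /= andbT negbK.
have HyY : y \notin Y by move: Hy; rewrite in_fsetI in_fsetD => /andP[_ /andP[]].
have HzS1 : z \in fg_X h1 `&` Y by rewrite in_fsetI Hz1 HzY.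
have HzS2 : z \in fg_X h2 `&` Y by rewrite -same_dom.
rewrite -(restrict_flow HzS1) -(restrict_flow HzS2).
have := restricted_tf_agree (fun a b _ _ => mle_refl _) HzY HyY; rewrite /tf /outflow.
change (with_in (restrict h1 Y) (fg_in (restrict h1 Y))) with (restrict h1 Y).
move=> /= ->; congr (fg_E h2 z y _).
by apply: flow_ext => //= a b Ha Hb; apply: restricted_in_agree; rewrite ?same_dom.
Qed.

Lemma closed_footprint : FP h1 h2 Y.
Proof. by split; [exact: Y_sub | split; [exact: restrict_ctx_equiv | exact: restrict_complement_eq]]. Qed.

End ClosedFootprint.

Theorem theorem2 (M : flowMonoid) (h1 h2 : flowGraph M) (F : option {fset nat}) :
  fg_X h1 = fg_X h2 ->
  in_eq (fg_X h1) (fg_in h1) (fg_in h2) ->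
  is_lfp (fg_X h1) (ext h1 h2) F ->
  F <> None ->
  FP_top h1 h2 F.
Proof.
move=> same_dom same_in [F_sub [F_fixed _]].
case: F F_sub F_fixed => [Y|] //= Y_sub Y_fixed _.
have [same_edges_out no_TF] := ext_fixed_closed Y_fixed.
exact: closed_footprint.
Qed.
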